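(* Let $p\ge 1$, let $\mathcal{T}$ be any set of $n$ tasks with latent wait times $t_1,\dots,t_n\ge 0$, and let $\pi$ be any tour of $\mathcal{T}$ starting at the vehicle start point $x_s$. Then \[ l(\pi)\le \Big(Q\,(p+1)\,c^p(\pi)^p\Big)^{\frac{1}{p+1}}. \]
   Context: A single vehicle moves at unit speed (so distances equal travel times). All tasks, and the vehicle start point $x_s$, lie in a connected planar region $\mathcal{E}\subset\mathbb{R}^2$; $Q'$ denotes the maximum Euclidean distance between any two of these points, $\bar s>0$ is the expected service time of a task, and $Q=Q'+\bar s$. A task $\tau_i$ has a location $x_i\in\mathcal{E}$ and a latent wait time $t_i\ge 0$ (time it has already waited when the tour is planned). A tour $\pi=(x_s,\tau_1,\dots,\tau_n)$ is an ordering in which every task of $\mathcal{T}$ is visited exactly once, starting from $x_s$; writing $x_0=x_s$ and indexing tasks in tour order, let $l_j=\|x_j-x_{j-1}\|$ for $j=1,\dots,n$ and $l(\pi)=\sum_{j=1}^n l_j$ (the length of $\pi$). For $p\ge1$ the cost of $\pi$ is \[ c^p(\pi)=\Big(\sum_{i=1}^n\Big(t_i+\sum_{j=1}^i l_j\Big)^p\Big)^{1/p}. \] *)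

From HB Require Import structures.
From mathcomp Require Import all_boot all_order all_algebra all_fingroup.
From mathcomp Require Import all_classical all_reals all_analysis.
Set Implicit Arguments. Unset Strict Implicit. Unset Printing Implicit Defensive.
Import Order.TTheory GRing.Theory Num.Theory numFieldNormedType.Exports.
Local Open Scope ring_scope.

Section Tour.
Variable R : realType.

Definition edist (a b : R * R) : R :=
  Num.sqrt ((a.1 - b.1) ^+ 2 + (a.2 - b.2) ^+ 2).

Variables (n : nat) (xs : R * R) (locs : 'I_n -> R * R) (wt : 'I_n -> R).
(* a tour: the k-th visited task (k = 0..n-1) is sigma k *)
Variable sigma : {perm 'I_n}.

(* x_0 = x_s, x_j = location of j-th visited task (j = 1..n) *)
Definition tour_pts : seq (R * R) := xs :: [seq locs (sigma k) | k <- enum 'I_n].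

Definition leg (j : nat) : R := edist (nth xs tour_pts j.-1) (nth xs tour_pts j).

Definition tour_len : R := \sum_(1 <= j < n.+1) leg j.

Definition arrival (i : nat) : R :=
  nth 0 [seq wt (sigma k) | k <- enum 'I_n] i.-1 + \sum_(1 <= j < i.+1) leg j.

Definition tour_cost (p : R) : R :=
  powR (\sum_(1 <= i < n.+1) powR (arrival i) p) p^-1.

Definition point (a : option 'I_n) : R * R :=
  if a is Some i then locs i else xs.
Definition Qprime : R :=
  \big[Num.max/0]_(a : option 'I_n) \big[Num.max/0]_(b : option 'I_n) edist (point a) (point b).

End Tour.

(* Write S_m for the length of the first m legs. Each leg is at most Q', so
   the convexity bound S_{m+1}^{p+1} - S_m^{p+1} <= (p+1) S_{m+1}^p l_{m+1}
   telescopes to l(pi)^{p+1} <= (p+1) Q' sum_i S_i^p.  Since the i-th arrival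
   time t_i + S_i is at least S_i, the last sum is at most c^p(pi)^p, and
   Q' <= Q. *)
From Pilot Require Import Defs.
From HB Require Import structures.
From mathcomp Require Import all_boot all_order all_algebra all_fingroup.
From mathcomp Require Import all_classical all_reals all_analysis.
From mathcomp Require Import ring lra.
Import Order.TTheory GRing.Theory Num.Theory numFieldNormedType.Exports.
Set Implicit Arguments. Unset Strict Implicit. Unset Printing Implicit Defensive.
Local Open Scope ring_scope.

Section PowR.
Variable R : realType.

(* Weighted AM-GM (Young with exponents p+1 and (p+1)/p) for a and b^p. *)
Lemma powR_succ_sub_le (p a b : R) : 0 < p -> 0 <= a -> 0 <= b ->
  b `^ (p + 1) - a `^ (p + 1) <= (p + 1) * b `^ p * (b - a).
Proof.
move=> p_gt0 a_ge0 b_ge0.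
have q_gt0 : 0 < p + 1 by rewrite addr_gt0.
have q'_gt0 : 0 < (p + 1) / p by rewrite divr_gt0.
have conj : (p + 1)^-1 + ((p + 1) / p)^-1 = 1 by field; rewrite !gt_eqF.
have young := conjugate_powR a_ge0 (powR_ge0 b p) q_gt0 q'_gt0 conj.
rewrite -powRrM (_ : p * _ = p + 1) in young; last by field; rewrite gt_eqF.
have bq : b `^ (p + 1) = b * b `^ p by rewrite -(mulr_powRB1 b_ge0 q_gt0) addrK.
have amgm : (p + 1) * (a * b `^ p) <= a `^ (p + 1) + p * (b * b `^ p).
  rewrite -bq; have := ler_wpM2l (ltW q_gt0) young.
  congr (_ <= _); field; rewrite !gt_eqF //.
rewrite bq; nra.
Qed.

Lemma ler_powR_inv (q x y : R) : 0 < q -> 0 <= x -> x `^ q <= y ->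
  x <= y `^ q^-1.
Proof.
move=> q_gt0 x_ge0 xq_le_y.
rewrite -[x in x <= _](powRr1 x_ge0) -(mulfV (lt0r_neq0 q_gt0)) powRrM.
apply: ge0_ler_powR => //; rewrite ?invr_ge0 ?ltW // nnegrE ?powR_ge0 //.
exact: le_trans (powR_ge0 _ _) xq_le_y.
Qed.

Lemma powR_partial_sum_le (l : nat -> R) (Q p : R) (m : nat) :
  0 < p -> (forall k, 0 <= l k <= Q) ->
  (\sum_(1 <= k < m.+1) l k) `^ (p + 1) <=
  (p + 1) * Q * \sum_(1 <= i < m.+1) (\sum_(1 <= k < i.+1) l k) `^ p.
Proof.
move=> p_gt0 l_bnd.
have S_ge0 i : 0 <= \sum_(1 <= k < i.+1) l k.
  by apply: sumr_ge0 => k _; case/andP: (l_bnd k).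
elim: m => [|m IH].
  by rewrite !big_geq // powR0 ?mulr0 // gt_eqF // addr_gt0.
set S := \sum_(1 <= k < m.+1) l k in IH *.
set T := \sum_(1 <= k < m.+2) l k.
rewrite [in X in _ <= X]big_nat_recr //=.
have step := powR_succ_sub_le p_gt0 (S_ge0 m) (S_ge0 m.+1).
rewrite [T - S](_ : _ = l m.+1) in step; last first.
  by rewrite /T big_nat_recr //= -/S addrAC subrr add0r.
have leg_le : (p + 1) * T `^ p * l m.+1 <= (p + 1) * Q * T `^ p.
  rewrite mulrAC ler_wpM2r ?powR_ge0 // ler_wpM2l ?addr_ge0 ?(ltW p_gt0) //.
  by case/andP: (l_bnd m.+1).
rewrite -/T mulrDr; lra.
Qed.

End PowR.

Section Tour.
Variables (R : realType) (n : nat) (xs : R * R) (locs : 'I_n -> R * R).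
Variables (wt : 'I_n -> R) (sigma : {perm 'I_n}).

Lemma nth_tour_pts j :
  exists a, nth xs (tour_pts xs locs sigma) j = Defs.point xs locs a.
Proof.
case: j => [|k] /=; first by exists None.
have [k_lt|k_ge] := ltnP k (size [seq locs (sigma i) | i <- enum 'I_n]).
  by have /mapP [i _ ->] := mem_nth xs k_lt; exists (Some (sigma i)).
by rewrite nth_default //; exists None.
Qed.

Lemma leg_bounds j : 0 <= leg xs locs sigma j <= Qprime xs locs.
Proof.
rewrite sqrtr_ge0 /leg.
have [a ->] := nth_tour_pts j.-1; have [b ->] := nth_tour_pts j.
apply: le_trans (le_bigmax _ _ a).
exact: (le_bigmax _ (fun b => Defs.edist (Defs.point xs locs a) (Defs.point xs locs b)) b).
Qed.

Lemma Qprime_ge0 : 0 <= Qprime xs locs.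
Proof. by case/andP: (leg_bounds 0); apply: le_trans. Qed.

Lemma sum_legs_ge0 i : 0 <= \sum_(1 <= j < i.+1) leg xs locs sigma j.
Proof. by apply: sumr_ge0 => j _; case/andP: (leg_bounds j). Qed.

Lemma sum_legs_le_arrival i : (forall k, 0 <= wt k) ->
  \sum_(1 <= j < i.+1) leg xs locs sigma j <= arrival xs locs wt sigma i.
Proof.
move=> wt_ge0; rewrite /arrival lerDr.
have [i_lt|i_ge] := ltnP i.-1 (size [seq wt (sigma k) | k <- enum 'I_n]).
  by have /mapP [k _ ->] := mem_nth 0 i_lt.
by rewrite nth_default.
Qed.

Lemma tour_cost_powR (p : R) : 0 < p ->
  tour_cost xs locs wt sigma p `^ p =
  \sum_(1 <= i < n.+1) arrival xs locs wt sigma i `^ p.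
Proof.
move=> p_gt0; rewrite -powRrM mulVf ?gt_eqF // powRr1 //.
by apply: sumr_ge0 => i _; apply: powR_ge0.
Qed.

End Tour.

Theorem lemma1 (R : realType) (E : set (R * R)) (n : nat) (xs : R * R)
    (locs : 'I_n -> R * R) (wt : 'I_n -> R) (sigma : {perm 'I_n}) (sbar p : R) :
  connected E -> E xs -> (forall i, E (locs i)) ->
  (forall i, 0 <= wt i) -> 0 < sbar -> 1 <= p ->
  tour_len xs locs sigma <=
  powR ((Qprime xs locs + sbar) * (p + 1) * powR (tour_cost xs locs wt sigma p) p)
       (p + 1)^-1.
Proof.
move=> _ _ _ wt_ge0 sbar_gt0 p_ge1.
have p_gt0 : 0 < p by apply: lt_le_trans p_ge1.
apply: ler_powR_inv; first by rewrite addr_gt0.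
  exact: sum_legs_ge0.
apply: le_trans (powR_partial_sum_le n p_gt0 (leg_bounds xs locs sigma)) _.
rewrite tour_cost_powR // [_ * (p + 1)]mulrC -!mulrA.
apply: ler_wpM2l; first by rewrite addr_ge0 // ltW.
apply: ler_pM.
- exact: Qprime_ge0.
- by apply: sumr_ge0 => i _; apply: powR_ge0.
- by rewrite lerDl ltW.
apply: ler_sum => i _; apply: ge0_ler_powR; rewrite ?nnegrE ?(ltW p_gt0) //.
- exact: sum_legs_ge0.
- exact: le_trans (sum_legs_ge0 _ _ _ i) (sum_legs_le_arrival _ _ _ i wt_ge0).
- exact: sum_legs_le_arrival.
Qed.
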